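(* Let $f:\mathbb{R}^n\to\mathbb{R}$ be a continuously differentiable convex function, and $s$ a positive integer. Let $h(x)=\sum_{i=1}^n h_i(x_i)$ with each $h_i:\mathbb{R}\to\mathbb{R}$ convex and continuously differentiable, with $h$ supercoercive ($\lim_{\|x\|\to\infty}h(x)/\|x\|=\infty$), and assume: (i) if $x_k\to x$ then $D_h(x,x_k)\to0$; (ii) if $D_h(x,x_k)\to0$ for some $x$, then $x_k\to x$; (iii) if $D_h(x_{k+1},x_k)\to0$ then $\|x_{k+1}-x_k\|\to0$ (for all sequences $(x_k)$ in $\mathbb{R}^n$). Assume $L_hh-f$ is convex for some $L_h>0$ and $L>L_h$. Let $(x_k)$ be generated by the BPG algorithm with $h$ and $L$. If $(x_k)$ has a limit point $\bar x$ with $\|\bar x\|_0=s$, then the entire sequence $(x_k)$ converges to $\bar x$.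
   Context: $C_s=\{x\in\mathbb{R}^n:\|x\|_0\le s\}$ where $\|x\|_0$ is the number of nonzero entries. $D_h(y,x)=h(y)-h(x)-\nabla h(x)^T(y-x)$. BPG algorithm: start from $x_0\in C_s$ and for $k\ge0$ pick $x_{k+1}\in\operatorname{argmin}_{x\in C_s}\ \nabla f(x_k)^T(x-x_k)+LD_h(x,x_k)$. *)

From HB Require Import structures.
From mathcomp Require Import all_boot all_order all_algebra.
From mathcomp Require Import all_classical all_reals all_analysis.
Set Implicit Arguments. Unset Strict Implicit. Unset Printing Implicit Defensive.
Import Order.TTheory GRing.Theory Num.Theory.
Import numFieldNormedType.Exports.
Local Open Scope classical_set_scope.
Local Open Scope ring_scope.

Definition convex_fun {R : realType} {n : nat} (f : 'rV[R]_n -> R) : Prop :=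
  forall (x y : 'rV[R]_n) (t : R), 0 <= t -> t <= 1 ->
    f (t *: x + (1 - t) *: y) <= t * f x + (1 - t) * f y.

Definition convex_fun1 {R : realType} (g : R -> R) : Prop :=
  forall (x y t : R), 0 <= t -> t <= 1 ->
    g (t * x + (1 - t) * y) <= t * g x + (1 - t) * g y.

Definition grad {R : realType} {n : nat} (f : 'rV[R]_n -> R) (x : 'rV[R]_n)
  : 'rV[R]_n := \row_i ('d f x (delta_mx 0 i : 'rV[R]_n)).

Definition C1 {R : realType} {n : nat} (f : 'rV[R]_n -> R) : Prop :=
  (forall x, differentiable f x) /\ continuous (grad f).

Definition C1_1 {R : realType} (g : R -> R) : Prop :=
  (forall x, derivable g x 1) /\ continuous (derive1 g).

Definition Dbreg {R : realType} {n : nat} (h : 'rV[R]_n -> R) (y x : 'rV[R]_n) : R :=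
  h y - h x - 'd h x (y - x).

Definition l0 {R : realType} {n : nat} (x : 'rV[R]_n) : nat :=
  #|[set i : 'I_n | x 0 i != 0]|.

Definition Cs {R : realType} {n : nat} (s : nat) : set 'rV[R]_n :=
  [set x | (l0 x <= s)%N].

Definition supercoercive {R : realType} {n : nat} (h : 'rV[R]_n -> R) : Prop :=
  forall M : R, exists r : R, forall x : 'rV[R]_n, r <= `|x| -> M <= h x / `|x|.

Definition BPG_seq {R : realType} {n : nat} (f h : 'rV[R]_n -> R) (L : R) (s : nat)
  (x : nat -> 'rV[R]_n) : Prop :=
  Cs s (x 0%N) /\
  forall k : nat, Cs s (x k.+1) /\
    forall z : 'rV[R]_n, Cs s z ->
      'd f (x k) (x k.+1 - x k) + L * Dbreg h (x k.+1) (x k)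
      <= 'd f (x k) (z - x k) + L * Dbreg h z (x k).

Definition seq_limit_point {R : realType} {n : nat} (x : nat -> 'rV[R]_n) (xb : 'rV[R]_n) : Prop :=
  exists phi : nat -> nat, (forall k, (phi k < phi k.+1)%N) /\ (x \o phi) @ \oo --> xb.

From HB Require Import structures.
From mathcomp Require Import all_boot all_order all_algebra.
From mathcomp Require Import all_classical all_reals all_analysis.
From mathcomp Require Import ring lra.
Import Order.TTheory GRing.Theory Num.Theory.
Import numFieldNormedType.Exports.
Local Open Scope classical_set_scope.
Local Open Scope ring_scope.

(* Since [Lh h - f] is convex, each BPG step decreases [f] by at least
   [(L - Lh) D_h(x_{k+1}, x_k)]; hence [f (x_k)] decreases to [f xb] and, by (iii),
   the steps [x_{k+1} - x_k] vanish.  As [||xb||_0 = s], every point of [C_s] close to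
   [xb] has exactly the support of [xb], so once [x_k] is close to [xb] the segment
   from [x_{k+1}] to [xb] lies in [C_s].  First-order optimality of the BPG step along
   that segment and the three-point identity then give the Fejer inequality
   [D_h(xb, x_{k+1}) <= D_h(xb, x_k)].  By (ii) a small [D_h(xb, x_k)] keeps [x_k] close
   to [xb], so [D_h(xb, x_k)] is eventually nonincreasing; by (i) it tends to 0 along
   the subsequence converging to [xb], hence along the whole sequence, and (ii) gives
   [x_k --> xb]. *)

Lemma increasing_ge_id {phi : nat -> nat} :
  (forall k, (phi k < phi k.+1)%N) -> forall k, (k <= phi k)%N.
Proof. by move=> hphi; elim=> [|k IH] //; exact: leq_ltn_trans IH (hphi k). Qed.

Section TailNonincreasing.
Variables (R : realType) (u : R^nat) (K : nat).
Hypothesis u_tail : forall k, (K <= k)%N -> u k.+1 <= u k.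

Lemma tail_nonincreasing {k m} : (K <= k)%N -> (k <= m)%N -> u m <= u k.
Proof.
move=> Kk; elim: m => [|m IH]; first by rewrite leqn0 => /eqP ->.
rewrite leq_eqVlt => /orP [/eqP <- //| km].
by apply: le_trans (IH km); apply: u_tail; exact: leq_trans Kk km.
Qed.

Variables (phi : nat -> nat) (l : R).
Hypotheses (phi_incr : forall k, (phi k < phi k.+1)%N) (u_phi : u \o phi @ \oo --> l).

Lemma subseq_lim_le {k} : (K <= k)%N -> l <= u k.
Proof.
move=> Kk; apply: (closed_cvg _ (@closed_le _ (u k)) _ _ u_phi).
near=> j; apply: tail_nonincreasing Kk _.
apply: leq_trans _ (increasing_ge_id phi_incr j).
by near: j; exists k.
Unshelve. all: by end_near. Qed.

Lemma subseq_cvg_tail_nonincreasing : u @ \oo --> l.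
Proof.
apply/cvgrPdist_lt => e e0.
move/cvgrPdist_lt: u_phi => /(_ e e0) [N _ HN].
pose j := maxn N K.
have Kphij : (K <= phi j)%N.
  exact: leq_trans (leq_maxr N K) (increasing_ge_id phi_incr j).
exists (phi j) => // k /= jk.
have := HN j (leq_maxl _ _); rewrite /= !ltr_distlC.
have := tail_nonincreasing Kphij jk; have := subseq_lim_le (leq_trans Kphij jk).
lra.
Qed.

End TailNonincreasing.

Lemma trapped_cvg0 (R : realType) (u : R^nat) (phi : nat -> nat) eps K :
  (forall k, (phi k < phi k.+1)%N) -> 0 < eps ->
  (forall k, (K <= k)%N -> u k < eps -> u k.+1 <= u k) ->
  u \o phi @ \oo --> 0 -> u @ \oo --> 0.
Proof.
move=> phi_incr eps0 u_trap u_phi.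
have [j Kj uj] : exists2 j, (K <= phi j)%N & u (phi j) < eps.
  have /cvgrPdist_lt/(_ eps eps0) [N _ HN] := u_phi.
  exists (maxn N K).
    exact: leq_trans (leq_maxr N K) (increasing_ge_id phi_incr _).
  by apply: le_lt_trans (HN _ (leq_maxl N K)); rewrite /= sub0r normrN ler_norm.
have u_small m : u (phi j + m)%N < eps.
  elim: m => [|m IH]; first by rewrite addn0.
  rewrite addnS; apply: le_lt_trans (u_trap _ _ IH) IH.
  exact: leq_trans Kj (leq_addr _ _).
apply: (@subseq_cvg_tail_nonincreasing _ u (phi j) _ phi) => // k jk.
by apply: u_trap (leq_trans Kj jk) _; rewrite -(subnKC jk).
Qed.

Section DirectionalDerivative.
Variables (R : realType) (V : normedModType R).
Implicit Types (g : V -> R) (x d : V).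

Lemma diff_in_closed_of_quotients g x d (A : set R) :
  differentiable g x -> closed A ->
  (forall t, 0 < t -> t <= 1 -> A (t^-1 * (g (t *: d + x) - g x))) ->
  A ('d g x d).
Proof.
move=> dg cA qA.
have dgd : derivable g x d by apply: diff_derivable.
have : (fun t : R => t^-1 *: (g (t *: d + x) - g x)) @ 0^' --> 'd g x d.
  by rewrite -deriveE.
move/cvg_dnbhs_at_right; apply: closed_cvg => //.
near=> t; apply: qA; near: t; [exact: nbhs_right_gt | exact: nbhs_right_le].
Unshelve. all: by end_near. Qed.

Lemma diff_ge_of_min_on_segment g x d a :
  differentiable g x ->
  (forall t, 0 < t -> t <= 1 -> g x <= g (t *: d + x) + t * a) ->
  - a <= 'd g x d.
Proof.
move=> dg gmin; apply: (@diff_in_closed_of_quotients g x d [set r | - a <= r]) => //.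
move=> t t0 t1; rewrite /= ler_pdivlMl //.
have := gmin t t0 t1; lra.
Qed.

End DirectionalDerivative.

Lemma convex_diff_le (R : realType) (n : nat) (g : 'rV[R]_n -> R) x y :
  convex_fun g -> differentiable g x -> 'd g x (y - x) <= g y - g x.
Proof.
move=> gc dg; apply: (@diff_in_closed_of_quotients _ _ g x _ [set r | r <= g y - g x]) => //.
move=> t t0 t1; rewrite /= ler_pdivrMl //.
have -> : t *: (y - x) + x = t *: y + (1 - t) *: x.
  by rewrite scalerBr scalerBl scale1r addrCA addrA [_ + x]addrC addrA.
have := gc y x t (ltW t0) t1; lra.
Qed.

Section SeparableFunction.
Variables (R : realType) (n : nat) (hi : 'I_n -> R -> R) (h : 'rV[R]_n -> R).
Hypothesis hE : forall z, h z = \sum_(i < n) hi i (z 0 i).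

Lemma separable_differentiable x :
  (forall i, C1_1 (hi i)) -> differentiable h x.
Proof.
move=> hC.
have -> : h = \sum_(i < n) (fun z : 'rV[R]_n => hi i (z 0 i)).
  by apply: funext => z; rewrite hE fct_sumE.
apply: differentiable_sum => i.
apply: (differentiable_comp (f := fun z : 'rV[R]_n => z 0 i) (g := hi i)).
  exact: differentiable_coord.
by apply/derivable1_diffP; case: (hC i).
Qed.

Lemma separable_convex : (forall i, convex_fun1 (hi i)) -> convex_fun h.
Proof.
move=> hc x y t t0 t1; rewrite !hE !mulr_sumr -big_split /=.
by apply: ler_sum => i _; rewrite !mxE; exact: hc.
Qed.

End SeparableFunction.

Section Bregman.
Variables (R : realType) (n : nat) (h : 'rV[R]_n -> R).
Implicit Types x y z : 'rV[R]_n.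

Lemma Dbreg_ge0 x y :
  convex_fun h -> differentiable h x -> 0 <= Dbreg h y x.
Proof. by move=> hc hd; rewrite /Dbreg subr_ge0; exact: convex_diff_le. Qed.

Lemma Dbregxx x : Dbreg h x x = 0.
Proof. by rewrite /Dbreg !subrr linear0 subrr. Qed.

Lemma Dbreg_three_point x y z :
  Dbreg h z x - Dbreg h z y - Dbreg h y x = 'd h y (z - y) - 'd h x (z - y).
Proof.
(* Rewriting next to two distinct ['d] terms makes unification unfold [diff],
   which does not terminate in practice; hence the differentials are generalised
   first, here and below. *)
rewrite /Dbreg; move: ('d h x) ('d h y) => A B.
have -> : z - x = (z - y) + (y - x) by rewrite addrA subrK.
by rewrite linearD; ring.
Qed.

Lemma descent_lemma (f : 'rV[R]_n -> R) (Lh : R) y z :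
  convex_fun (fun w => Lh * h w - f w) ->
  differentiable f z -> differentiable h z ->
  f y <= f z + 'd f z (y - z) + Lh * Dbreg h y z.
Proof.
move=> gc df dh.
have gE : (fun w => Lh * h w - f w) = Lh *: h - f by apply: funext.
have dhZ : differentiable (Lh *: h) z by apply: differentiableZ.
have := @convex_diff_le _ _ _ z y (eq_ind _ convex_fun gc _ gE) (differentiableB dhZ df).
rewrite diffB // diffZ // /Dbreg; move: ('d h z) ('d f z) => A B /= ineq.
have {}ineq : Lh * A (y - z) - B (y - z) <= Lh * h y - f y - (Lh * h z - f z) := ineq.
move: (A (y - z)) (B (y - z)) ineq => a b ineq.
rewrite !mulrBr; lra.
Qed.

Lemma Dbreg_small_norm_lt z r :
  (forall y, 0 <= Dbreg h z y) ->
  (forall u : nat -> 'rV[R]_n,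
     (fun k => Dbreg h z (u k)) @ \oo --> 0 -> u @ \oo --> z) ->
  0 < r -> exists2 eps, 0 < eps & forall y, Dbreg h z y < eps -> `|z - y| < r.
Proof.
move=> D0 Dcvg r0; apply: contrapT => noeps.
have far k : exists y, Dbreg h z y < harmonic k /\ r <= `|z - y|.
  apply: contrapT => /forallNP nofar; apply: noeps.
  exists (harmonic k) => [|y Dy]; first exact: harmonic_gt0.
  by rewrite ltNge; apply/negP => ry; apply: (nofar y).
have [u /all_and2 [Du ru]] := choice far.
have u_z : u @ \oo --> z.
  apply: Dcvg; apply: (squeeze_cvgr _ (cvg_cst 0) (@cvg_harmonic R)).
  by near=> k; rewrite D0 ltW.
have /cvgrPdist_lt/(_ r r0)/filter_ex [k] := u_z.
by rewrite ltNge ru.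
Unshelve. all: by end_near. Qed.

End Bregman.

(* [A] stands for ['d f xk], kept abstract for the reason given in
   [Dbreg_three_point]. *)
Section BregmanStep.
Variables (R : realType) (n : nat) (h : 'rV[R]_n -> R).
Variables (A : {linear 'rV[R]_n -> R^o}) (L : R) (xk x1 : 'rV[R]_n).
Hypothesis L_gt0 : 0 < L.

Lemma Bregman_model_first_order d :
  differentiable h x1 ->
  (forall t, 0 < t -> t <= 1 ->
     A (x1 - xk) + L * Dbreg h x1 xk <=
     A (t *: d + x1 - xk) + L * Dbreg h (t *: d + x1) xk) ->
  - A d <= L * ('d h x1 d - 'd h xk d).
Proof.
move=> dh1; rewrite /Dbreg; move: ('d h xk) => B model_min.
suff : - (A d / L - B d) <= 'd h x1 d.
  move: ('d h x1 d) => c; rewrite -(ler_pM2l L_gt0) mulrBr.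
  have -> : L * - (A d / L - B d) = - A d + L * B d by field; rewrite lt0r_neq0.
  lra.
apply: diff_ge_of_min_on_segment dh1 _ => t t0 t1.
have := model_min t t0 t1.
have -> : t *: d + x1 - xk = t *: d + (x1 - xk) by rewrite addrA.
have AE : A (t *: d + (x1 - xk)) = t * A d + A (x1 - xk) by rewrite linearD linearZ.
have BE : B (t *: d + (x1 - xk)) = t * B d + B (x1 - xk) by rewrite linearD linearZ.
rewrite AE BE => opt; rewrite -(ler_pM2l L_gt0) mulrDr.
have -> : L * (t * (A d / L - B d)) = t * A d - L * (t * B d) by field; rewrite lt0r_neq0.
rewrite !mulrBr !mulrDr in opt; lra.
Qed.

Lemma Bregman_step_fejer (f : 'rV[R]_n -> R) (Lh : R) z :
  Lh <= L -> differentiable h x1 -> 0 <= Dbreg h x1 xk ->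
  (forall t, 0 < t -> t <= 1 ->
     A (x1 - xk) + L * Dbreg h x1 xk <=
     A (t *: (z - x1) + x1 - xk) + L * Dbreg h (t *: (z - x1) + x1) xk) ->
  f x1 <= f xk + A (x1 - xk) + Lh * Dbreg h x1 xk ->
  A (z - xk) <= f z - f xk ->
  f z <= f x1 ->
  Dbreg h z x1 <= Dbreg h z xk.
Proof.
move=> LhL dh1 D0 model_min descent convexity fz.
have opt : - A (z - x1) <= L * (Dbreg h z xk - Dbreg h z x1 - Dbreg h x1 xk).
  by rewrite Dbreg_three_point; exact: Bregman_model_first_order.
have lin : A (z - xk) = A (z - x1) + A (x1 - xk) by rewrite -linearD addrA subrK.
have LD : Lh * Dbreg h x1 xk <= L * Dbreg h x1 xk := ler_wpM2r D0 LhL.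
rewrite -(ler_pM2l L_gt0); move: opt LD descent.
move: (Dbreg h z x1) (Dbreg h z xk) (Dbreg h x1 xk) => Dz1 Dzk D1k.
rewrite !mulrBr; lra.
Qed.

End BregmanStep.

Section Support.
Variables (R : realType) (n : nat).
Implicit Types (x y z : 'rV[R]_n).

Definition supp x : {set 'I_n} := [set i | x 0 i != 0]%SET.

Lemma l0E x : l0 x = #|supp x|.
Proof.
rewrite /l0; apply: eq_card => i; rewrite [in RHS]inE.
by apply/idP/idP; rewrite inE.
Qed.

Lemma supp_subset_near x : \forall z \near x, supp x \subset supp z.
Proof.
pose P i (z : 'rV[R]_n) := x 0 i != 0 -> z 0 i != 0.
have : \forall z \near x, forall i, P i z.
  apply: (@filter_forall _ _ P (nbhs x) _) => i.
  have [xi0|xi0] := eqVneq (x 0 i) 0; first by apply: nearW => z; rewrite /P xi0 eqxx.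
  have /cvgrPdist_lt/(_ `|x 0 i|) := @coord_continuous R 1 n 0 i x.
  rewrite normr_gt0 xi0 => /(_ isT); apply: filterS => z xz _ /=.
  by apply: contraTneq xz => ->; rewrite subr0 ltxx.
by apply: filterS => z xz; apply/fintype.subsetP => i; rewrite !inE; exact: xz.
Qed.

Lemma Cs_supp_eq s x z :
  l0 x = s -> Cs s z -> supp x \subset supp z -> supp z = supp x.
Proof.
move=> l0x Cz xz; apply/esym/eqP; rewrite eqEcard xz /=.
by move: Cz; rewrite /Cs /= -!l0E l0x.
Qed.

Lemma l0_segment_le x y t :
  supp y \subset supp x -> (l0 (t *: (x - y) + y) <= l0 x)%N.
Proof.
move=> yx; rewrite !l0E; apply: subset_leq_card; apply/fintype.subsetP => i.
rewrite !inE !mxE; apply: contraR => /negPn xi0.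
have yi0 : y 0 i == 0.
  by apply: contraLR xi0 => yi; move: (fintype.subsetP yx i); rewrite !inE; apply.
by rewrite (eqP xi0) (eqP yi0) subrr mulr0 addr0.
Qed.

End Support.

Section BPGIteration.
Variables (R : realType) (n : nat) (f h : 'rV[R]_n -> R) (Lh L : R) (s : nat).
Variable x : nat -> 'rV[R]_n.
Hypotheses (f_diff : forall z, differentiable f z) (f_convex : convex_fun f).
Hypotheses (h_diff : forall z, differentiable h z) (h_convex : convex_fun h).
Hypotheses (Lh_convex : convex_fun (fun z => Lh * h z - f z)).
Hypotheses (Lh_gt0 : 0 < Lh) (Lh_lt_L : Lh < L).
Hypothesis x_BPG : BPG_seq f h L s x.

Let L_gt0 : 0 < L := lt_trans Lh_gt0 Lh_lt_L.
Let Dbreg_h_ge0 y z : 0 <= Dbreg h y z := @Dbreg_ge0 _ _ h z y h_convex (h_diff z).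

Lemma BPG_Cs k : Cs s (x k).
Proof. by case: k => [|k]; [exact: x_BPG.1 | exact: (x_BPG.2 k).1]. Qed.

Lemma BPG_sufficient_decrease k :
  f (x k.+1) + (L - Lh) * Dbreg h (x k.+1) (x k) <= f (x k).
Proof.
have := (x_BPG.2 k).2 _ (BPG_Cs k).
rewrite subrr linear0 Dbregxx mulr0 addr0.
have := @descent_lemma _ _ h f Lh (x k.+1) (x k) Lh_convex (f_diff _) (h_diff _).
rewrite mulrBl; lra.
Qed.

Lemma BPG_f_nonincreasing k : f (x k.+1) <= f (x k).
Proof.
have := BPG_sufficient_decrease k.
have : 0 <= (L - Lh) * Dbreg h (x k.+1) (x k).
  by rewrite mulr_ge0 ?Dbreg_h_ge0 // subr_ge0 ltW.
lra.
Qed.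

Lemma BPG_fejer k z :
  (forall t, 0 < t -> t <= 1 -> Cs s (t *: (z - x k.+1) + x k.+1)) ->
  f z <= f (x k.+1) ->
  Dbreg h z (x k.+1) <= Dbreg h z (x k).
Proof.
move=> seg fz.
apply: (@Bregman_step_fejer _ _ h ('d f (x k)) L (x k) (x k.+1) L_gt0 f Lh) => //.
- exact: ltW.
- by move=> t t0 t1; exact: (x_BPG.2 k).2 _ (seg t t0 t1).
- exact: descent_lemma.
- exact: convex_diff_le.
Qed.

Variables (phi : nat -> nat) (xb : 'rV[R]_n).
Hypotheses (phi_incr : forall k, (phi k < phi k.+1)%N) (x_phi : x \o phi @ \oo --> xb).

Let f_x_phi : (fun k => f (x k)) \o phi @ \oo --> f xb.
Proof. exact: continuous_cvg (differentiable_continuous (f_diff xb)) x_phi. Qed.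

Lemma BPG_f_ge k : f xb <= f (x k).
Proof.
exact: (@subseq_lim_le _ (fun k => f (x k)) 0 (fun k _ => BPG_f_nonincreasing k) _ _
  phi_incr f_x_phi).
Qed.

Lemma BPG_f_cvg : (fun k => f (x k)) @ \oo --> f xb.
Proof.
exact: (@subseq_cvg_tail_nonincreasing _ _ 0 (fun k _ => BPG_f_nonincreasing k) _ _
  phi_incr f_x_phi).
Qed.

Lemma BPG_step_Dbreg_cvg0 : (fun k => Dbreg h (x k.+1) (x k)) @ \oo --> 0.
Proof.
have gap : (fun k => (f (x k) - f (x k.+1)) / (L - Lh)) @ \oo --> 0.
  rewrite -(mul0r (L - Lh)^-1) -(subrr (f xb)).
  apply: cvgM (cvg_cst _); apply: cvgB; first exact: BPG_f_cvg.
  by have := BPG_f_cvg; rewrite -cvg_shiftS.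
apply: (squeeze_cvgr _ (cvg_cst 0) gap); near=> k.
rewrite Dbreg_h_ge0 /= ler_pdivlMr ?subr_gt0 // mulrC.
have := BPG_sufficient_decrease k; lra.
Unshelve. all: by end_near. Qed.

Lemma BPG_fejer_near_limit :
  l0 xb = s ->
  (forall u : nat -> 'rV[R]_n,
     (fun k => Dbreg h xb (u k)) @ \oo --> 0 -> u @ \oo --> xb) ->
  (forall u : nat -> 'rV[R]_n,
     (fun k => Dbreg h (u k.+1) (u k)) @ \oo --> 0 ->
     (fun k => `|u k.+1 - u k|) @ \oo --> 0) ->
  exists2 eps, 0 < eps & exists K, forall k, (K <= k)%N ->
    Dbreg h xb (x k) < eps -> Dbreg h xb (x k.+1) <= Dbreg h xb (x k).
Proof.
move=> l0xb Dcvg step_cvg.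
have /nbhs_ballP [del del0 supp_near] := @supp_subset_near _ _ xb.
have del2 : 0 < del / 2 by rewrite divr_gt0.
have [eps eps0 Deps] := @Dbreg_small_norm_lt _ _ h xb _ (Dbreg_h_ge0 xb) Dcvg del2.
have /cvgrPdist_lt/(_ _ del2) [K _ small_step] := step_cvg x BPG_step_Dbreg_cvg0.
exists eps => //; exists K => k Kk Dk.
have close : ball xb del (x k.+1).
  rewrite -ball_normE /=; apply: le_lt_trans (ler_distD (x k) _ _) _.
  rewrite (splitr del) ltrD ?Deps // distrC.
  by have := small_step k Kk; rewrite /= sub0r normrN normr_id.
have supp_eq := @Cs_supp_eq _ _ _ _ _ l0xb (BPG_Cs k.+1) (supp_near _ close).
apply: BPG_fejer (BPG_f_ge k.+1) => t _ _.
by rewrite /Cs /= -l0xb l0_segment_le // supp_eq.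
Qed.

End BPGIteration.

Theorem theoremA4 (R : realType) (n : nat) (f : 'rV[R]_n -> R) (s : nat)
  (hi : 'I_n -> R -> R) (h : 'rV[R]_n -> R) (Lh L : R) (x : nat -> 'rV[R]_n)
  (xb : 'rV[R]_n) :
  C1 f -> convex_fun f -> (0 < s)%N ->
  (forall z, h z = \sum_(i < n) hi i (z 0 i)) ->
  (forall i, convex_fun1 (hi i)) -> (forall i, C1_1 (hi i)) ->
  supercoercive h ->
  (forall (u : nat -> 'rV[R]_n) (z : 'rV[R]_n),
     (u @ \oo --> z) -> ((fun k => Dbreg h z (u k)) @ \oo --> 0)) ->
  (forall (u : nat -> 'rV[R]_n) (z : 'rV[R]_n),
     ((fun k => Dbreg h z (u k)) @ \oo --> 0) -> (u @ \oo --> z)) ->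
  (forall (u : nat -> 'rV[R]_n),
     ((fun k => Dbreg h (u k.+1) (u k)) @ \oo --> 0) ->
     ((fun k => `|u k.+1 - u k|) @ \oo --> 0)) ->
  0 < Lh -> convex_fun (fun z => Lh * h z - f z) -> Lh < L ->
  BPG_seq f h L s x ->
  seq_limit_point x xb -> l0 xb = s ->
  (x @ \oo --> xb).
Proof.
move=> [f_diff _] f_convex _ hE hi_convex hi_C1 _ Dcvg_of_cvg cvg_of_Dcvg step_cvg
  Lh_gt0 Lh_convex Lh_lt_L x_BPG [phi [phi_incr x_phi]] l0xb.
have h_diff z : differentiable h z := @separable_differentiable _ _ hi h hE z hi_C1.
have h_convex : convex_fun h := @separable_convex _ _ hi h hE hi_convex.
have [eps eps0 [K fejer]] := @BPG_fejer_near_limit _ _ _ _ _ _ _ _ f_diff f_convex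
  h_diff h_convex Lh_convex Lh_gt0 Lh_lt_L x_BPG _ _ phi_incr x_phi l0xb
  (cvg_of_Dcvg ^~ xb) step_cvg.
apply: cvg_of_Dcvg; apply: (@trapped_cvg0 _ _ phi eps K) => //.
exact: Dcvg_of_cvg x_phi.
Qed.
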